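(* Let $\Delta,\sigma>0$ and $C>1$ be real numbers, $t$ a positive integer, and $M_1,\dots,M_t$ finite sets with $\Delta\le|M_j|\le C\Delta$ for $j\in[t]$, where $\sigma:=\sum_{i,j=1}^t|M_i\cap M_j|$ satisfies $\sigma\le10^{-4}t^2\Delta$. Then there are at least $\frac{t^2\Delta}{16(2C+1)\sigma}$ pairwise disjoint sets $\tilde M_l\subseteq M_{i_l}$ with $|\tilde M_l|\ge\frac{\Delta}{4(2C+1)}$. *)

From HB Require Import structures.
From mathcomp Require Import all_boot all_order all_algebra.
From mathcomp Require Import reals.
Set Implicit Arguments. Unset Strict Implicit. Unset Printing Implicit Defensive.

Definition sigma (T : finType) (t : nat) (M : 'I_t -> {set T}) : nat :=
  \sum_(i < t) \sum_(j < t) #|M i :&: M j|.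

From HB Require Import structures.
From mathcomp Require Import all_boot all_order all_algebra.
From mathcomp Require Import reals.
From mathcomp Require Import lra zify.
Import Order.TTheory GRing.Theory Num.Theory.
Set Implicit Arguments. Unset Strict Implicit. Unset Printing Implicit Defensive.

(* Greedy packing. Call [i] good if its degree [\sum_j |M_i :&: M_j|] is at
   most twice the average [sigma / t]; by Markov, at least half of the indices
   are good. While fewer than [t^2 Delta / (48 sigma)] sets have been chosen,
   averaging the overlaps shows that some unchosen good [M_i] meets the chosen
   sets in at most [Delta / 2] points, so [M_i] minus their union is a new
   piece, disjoint from the others, of size at least [Delta / 2]. *)

Lemma card_bigcup_le (I T : finType) (P : {pred I}) (F : I -> {set T}) :
  (#|\bigcup_(i in P) F i| <= \sum_(i in P) #|F i|)%N.
Proof.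
apply: (big_ind2 (fun (A : {set T}) n => #|A| <= n)%N) => [|A m B n hA hB|//].
  by rewrite cards0.
by apply: leq_trans (leq_card_setU A B) (leq_add hA hB).
Qed.

Section Degrees.

Variables (T : finType) (t : nat) (M : 'I_t -> {set T}).

Definition degree (i : 'I_t) : nat := \sum_(j < t) #|M i :&: M j|.

Definition good : {set 'I_t} := [set i | degree i * t <= 2 * sigma M]%N.

(* Markov's inequality for the degrees, whose mean is [sigma M / t]. *)
Lemma card_good : (t <= 2 * #|good|)%N.
Proof.
have bad_mass : (#|~: good| * (2 * sigma M).+1 <= t * sigma M)%N.
  have -> : (t * sigma M = \sum_(i < t) degree i * t)%N.
    by rewrite /sigma -big_distrl mulnC.
  rewrite -sum_nat_const [X in (_ <= X)%N](bigID (mem (~: good))) /=.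
  apply: leq_trans (leq_addr _ _); apply: leq_sum => i.
  by rewrite in_setC inE -ltnNge.
have := cardsC good; rewrite card_ord; nia.
Qed.

Lemma sum_card_le_sigma : (\sum_(i < t) #|M i| <= sigma M)%N.
Proof. by apply: leq_sum => i _; rewrite (bigD1 i) //= setIid leq_addr. Qed.

End Degrees.

Local Open Scope ring_scope.

Section GreedyPacking.

Variables (R : realType) (T : finType) (t : nat) (M : 'I_t -> {set T}).
Variable Delta : R.
Hypothesis Delta_gt0 : 0 < Delta.
Hypothesis card_M_ge : forall i, Delta <= #|M i|%:R.

Definition packing (P : {set 'I_t}) (Mt : {ffun 'I_t -> {set T}}) : bool :=
  [forall i in P,
     [&& i \in good M, Mt i \subset M i & Delta / 2 <= #|Mt i|%:R]] &&
  [forall i in P, forall j in P, (i != j) ==> [disjoint Mt i & Mt j]].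

Definition overlap (P : {set 'I_t}) (i : 'I_t) : nat :=
  \sum_(l in P) #|M i :&: M l|.

Lemma sigma_ge : t%:R * Delta <= (sigma M)%:R.
Proof.
apply: le_trans (_ : (\sum_(i < t) #|M i|)%:R <= _); last first.
  by rewrite ler_nat sum_card_le_sigma.
rewrite natr_sum (le_trans _ (ler_sum _ (fun i _ => card_M_ge i))) //.
by rewrite sumr_const card_ord mulr_natl.
Qed.

Lemma card_fresh_ge (P : {set 'I_t}) (i : 'I_t) :
  (#|M i| <= #|M i :\: \bigcup_(l in P) M l| + overlap P i)%N.
Proof.
rewrite -(cardsID (\bigcup_(l in P) M l) (M i)) addnC leq_add2l.
apply: leq_trans (card_bigcup_le P (fun l => M i :&: M l)).
apply: subset_leq_card.
apply/subsetP => x /setIP[xMi /bigcupP[l lP xMl]].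
by apply/bigcupP; exists l; rewrite // inE xMi.
Qed.

Lemma packing_extend (P : {set 'I_t}) (Mt : {ffun 'I_t -> {set T}}) i :
  packing P Mt -> i \in good M :\: P -> (overlap P i)%:R * 2 <= Delta ->
  packing (i |: P)
          [ffun k => if k == i then M i :\: \bigcup_(l in P) M l else Mt k].
Proof.
move=> /andP[/forall_inP pieces /forall_inP disj].
move=> /setDP[iG iP] small.
have new_disj l : l \in P -> [disjoint Mt l & M i :\: \bigcup_(l in P) M l].
  move=> lP; case/and3P: (pieces l lP) => _ sub _.
  rewrite disjoints_subset; apply/subsetP => x xMt.
  have xU := subsetP (bigcup_sup l lP) x (subsetP sub x xMt).
  by rewrite in_setC in_setD xU.
apply/andP; split; apply/forall_inP => k /setU1P[->|kP] /=; rewrite !ffunE.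
- rewrite eqxx iG subsetDl /=.
  have := card_fresh_ge P i; rewrite -(ler_nat R) natrD.
  by have := card_M_ge i; lra.
- by rewrite (negbTE (memPn iP k kP)); exact: pieces.
- apply/forall_inP => l /setU1P[->|lP]; rewrite ?eqxx // ffunE.
  rewrite (negbTE (memPn iP l lP)) eq_sym (memPn iP l lP).
  by rewrite disjoint_sym new_disj.
- rewrite (negbTE (memPn iP k kP)); apply/forall_inP => l /setU1P[->|lP].
  by rewrite ffunE eqxx (memPn iP k kP) new_disj.
  by rewrite ffunE (negbTE (memPn iP l lP)); exact: (forall_inP (disj k kP)).
Qed.

Lemma sum_overlap_le (P : {set 'I_t}) :
  P \subset good M ->
  (t * \sum_(i in good M :\: P) overlap P i <= 2 * #|P| * sigma M)%N.
Proof.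
move=> PG.
have sum_overlap : (\sum_(i < t) overlap P i = \sum_(l in P) degree M l)%N.
  rewrite exchange_big /=; apply: eq_bigr => l _.
  by apply: eq_bigr => i _; rewrite setIC.
have deg_P : (\sum_(l in P) degree M l * t <= \sum_(l in P) 2 * sigma M)%N.
  by apply: leq_sum => l /(subsetP PG); rewrite inE.
rewrite sum_nat_const -big_distrl /= -sum_overlap in deg_P.
apply: leq_trans (_ : t * \sum_(i < t) overlap P i <= _)%N.
  rewrite leq_mul2l [X in (X <= _)%N]big_mkcond; apply/orP; right.
  by apply: leq_sum => i _; case: ifP.
by rewrite mulnC (mulnC 2) -mulnA.
Qed.

(* If all [g] fresh good indices had overlap above [Delta / 2], their total
   overlap [S] would give
   [t^2 Delta <= 2 (g + |P|) t Delta <= 4 t S + 2 |P| sigma <= 10 |P| sigma]. *)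
Lemma exists_fresh_light (P : {set 'I_t}) :
  P \subset good M -> (48 * #|P| * sigma M)%:R < t%:R ^+ 2 * Delta ->
  exists2 i, i \in good M :\: P & (overlap P i)%:R * 2 <= Delta.
Proof.
move=> PG small_P.
have [i /andP[iF light] | heavy] := pickP [pred i | (i \in good M :\: P) &&
                                             ((overlap P i)%:R * 2 <= Delta)].
  by exists i.
exfalso.
set g := #|good M :\: P|; set S := (\sum_(i in good M :\: P) overlap P i)%N.
have sD := sigma_ge; have sS := sum_overlap_le PG.
have hG : (t <= 2 * g + 2 * #|P|)%N.
  by have := card_good M; rewrite /g cardsD (setIidPr PG); lia.
have gS : g%:R * Delta <= 2 * S%:R.
  apply: le_trans (_ : \sum_(i in good M :\: P) Delta <= _).
    by rewrite sumr_const mulr_natl.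
  rewrite /S natr_sum mulr_sumr; apply: ler_sum => i iF.
  by have /negbT := heavy i; rewrite /= iF -ltNge; lra.
rewrite -(ler_nat R) natrD !natrM in hG; rewrite -/S -(ler_nat R) !natrM in sS.
rewrite !natrM expr2 in small_P.
have tD_hG := ler_wpM2r (mulr_ge0 (ler0n R t) (ltW Delta_gt0)) hG.
have t_gS := ler_wpM2l (ler0n R t) gS.
have P_sD := ler_wpM2l (ler0n R #|P|) sD.
have := mulr_ge0 (ler0n R #|P|) (ler0n R (sigma M)); lra.
Qed.

Lemma packing_sub_good P Mt : packing P Mt -> P \subset good M.
Proof.
by case/andP=> /forall_inP pieces _; apply/subsetP => i /pieces/and3P[].
Qed.

(* A packing of maximal size cannot be extended, so it is large. *)
Lemma exists_large_packing :
  exists P Mt, packing P Mt /\ t%:R ^+ 2 * Delta <= (48 * #|P| * sigma M)%:R.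
Proof.
have empty : packing set0 [ffun=> set0].
  by apply/andP; split; apply/forall_inP => i; rewrite inE.
have [[P Mt] /= P_pack P_max] :=
  @arg_maxnP _ (set0, [ffun=> set0]) [pred PM | packing PM.1 PM.2]
             (fun PM => #|PM.1|) empty.
exists P, Mt; split=> //; rewrite leNgt; apply/negP.
case/(exists_fresh_light (packing_sub_good P_pack)) => i iF light.
have := P_max (_, _) (packing_extend P_pack iF light); rewrite /= cardsU1.
by case/setDP: iF => _ ->; rewrite ltnn.
Qed.

End GreedyPacking.

(* The greedy bound [t^2 Delta / (48 sigma)] and the piece size [Delta / 2]
   beat the required ones since [C > 1]. *)
Theorem lemma14 (R : realType) (T : finType) (t : nat)
  (M : 'I_t -> {set T}) (Delta C : R) :
  0 < Delta -> 1 < C -> (0 < t)%N ->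
  (forall j, Delta <= #|M j|%:R <= C * Delta) ->
  0 < (sigma M)%:R :> R ->
  (sigma M)%:R <= 10 ^- 4 * t%:R ^+ 2 * Delta ->
  exists (k : nat) (idx : 'I_k -> 'I_t) (Mt : 'I_k -> {set T}),
    [/\ injective idx,
        (forall l, Mt l \subset M (idx l)),
        (forall l l', l != l' -> [disjoint Mt l & Mt l']),
        (forall l, Delta / (4 * (2 * C + 1)) <= #|Mt l|%:R) &
        t%:R ^+ 2 * Delta / (16 * (2 * C + 1) * (sigma M)%:R) <= k%:R].
Proof.
move=> D0 C1 _ card_M s0 _.
have card_M_ge j : Delta <= #|M j|%:R by case/andP: (card_M j).
have [P [Mt [/andP[/forall_inP pieces /forall_inP disj] large]]] :=
  exists_large_packing D0 card_M_ge.
exists #|P|, (@enum_val _ (mem P)), (fun l => Mt (enum_val l)); split.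
- exact: enum_val_inj.
- by move=> l; case/and3P: (pieces _ (enum_valP l)).
- move=> l l' ll'.
  apply: (implyP (forall_inP (disj _ (enum_valP l)) _ (enum_valP l'))).
  by rewrite (inj_eq enum_val_inj).
- move=> l; case/and3P: (pieces _ (enum_valP l)) => _ _ half.
  by rewrite ler_pdivrMr; [nra | lra].
rewrite ler_pdivrMr; last by apply: mulr_gt0; lra.
rewrite !natrM in large.
have C48 : 48 <= 16 * (2 * C + 1) by lra.
have := ler_wpM2l (mulr_ge0 (ler0n R #|P|) (ler0n R (sigma M))) C48; lra.
Qed.
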